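(* Let $(V,\omega)=(\mathbb{R}^{2d},\sum_i dx_i\wedge dy_i)$ and $n\ge1$. Identify $(V\times V)^{\times n}$ with $T^*(V^{\times n})$ via, in each factor, $((x,y),(x',y'))\mapsto(q,q',p,p')$ with $q=\tfrac{x+x'}2$, $q'=\tfrac{y+y'}2$, $p=y'-y$, $p'=x-x'$, where $Q=(q,q')\in V$ is the base point and $(p,p')$ the covector. Let $\mathscr{L}=\{(z_1,z_1',\dots,z_n,z_n')\in(V\times V)^{\times n}: z_i'=z_{i+1},\ i=1,\dots,n\}$ with indices mod $n$ ($z_{n+1}=z_1$). Then $\mathscr{L}$ is a Lagrangian subspace of $T^*(V^{\times n})$. If $n$ is odd, $\mathscr{L}$ is the graph of $dF$ for the quadratic function $F(Q_1,\dots,Q_n)=2\sum_{1\le i<j\le n}(-1)^{i+j-1}\omega(Q_i,Q_j)$. If $n$ is even, $\mathscr{L}$ is not given by a generating function (it is not the graph of the differential of a function on $V^{\times n}$).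
   Context: The symplectic form on $(V\times V)^{\times n}$ is $(\omega\ominus\omega)^{\oplus n}$, where $\omega\ominus\omega=dx'\wedge dy'-dx\wedge dy$ on $V\times V$; the identification above is a linear symplectomorphism onto $T^*(V^{\times n})$ with its canonical form $\sum (dq\wedge dp+dq'\wedge dp')$. Here $\omega((x,y),(x',y'))=x\cdot y'-y\cdot x'$. *)

From HB Require Import structures.
From mathcomp Require Import all_boot all_order all_algebra.
From mathcomp Require Import all_classical all_reals all_analysis.
Set Implicit Arguments. Unset Strict Implicit. Unset Printing Implicit Defensive.
Import Order.TTheory GRing.Theory Num.Theory.
Local Open Scope ring_scope.
Local Open Scope classical_set_scope.

Definition V (R : realType) (d : nat) := ('rV[R]_d * 'rV[R]_d)%type.

Definition dotv (R : realType) (d : nat) (u v : 'rV[R]_d) : R :=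
  \sum_(k < d) u 0 k * v 0 k.

Definition omega (R : realType) (d : nat) (z z' : V R d) : R :=
  dotv z.1 z'.2 - dotv z.2 z'.1.

(* V^{x n}: points (Q_1,...,Q_n), indices 0..n-1 *)
Definition Vn (R : realType) (n d : nat) := {ffun 'I_n -> V R d}.

(* T^*(V^{x n}) = V^{x n} x (V^{x n})^*, a point is (Q, P) with base point
   Q = (Q_i)_i, Q_i = (q_i, q'_i), and covector P = (P_i)_i, P_i = (p_i, p'_i). *)
Definition Tstar (R : realType) (n d : nat) := (Vn R n d * Vn R n d)%type.

Definition pairing (R : realType) (n d : nat) (P v : Vn R n d) : R :=
  \sum_(i < n) (dotv (P i).1 (v i).1 + dotv (P i).2 (v i).2).

Definition can_form (R : realType) (n d : nat) (u w : Tstar R n d) : R :=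
  pairing w.2 u.1 - pairing u.2 w.1.

Definition is_subspace (R : realType) (n d : nat) (L : set (Tstar R n d)) : Prop :=
  L 0 /\ (forall (a : R) (u w : Tstar R n d), L u -> L w -> L (a *: u + w)).

Definition lagrangian (R : realType) (n d : nat) (L : set (Tstar R n d)) : Prop :=
  is_subspace L /\
  (forall u : Tstar R n d, L u <-> (forall w, L w -> can_form u w = 0)).

Definition Phi (R : realType) (n d : nat) (z : 'I_n -> V R d * V R d) :
  Tstar R n d :=
  ([ffun i => (2^-1 *: ((z i).1.1 + (z i).2.1), 2^-1 *: ((z i).1.2 + (z i).2.2))],
   [ffun i => ((z i).2.2 - (z i).1.2, (z i).1.1 - (z i).2.1)]).

(* script L: z'_i = z_{i+1}, indices mod n; z i = (z_i, z'_i) *)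
Definition scriptL (R : realType) (n d : nat) : set (Tstar R n d) :=
  [set w | exists z : 'I_n -> V R d * V R d,
      (forall i : 'I_n, (z i).2 = (z (ordS i)).1) /\ Phi z = w].

(* differential of F at Q applied to v, as the derivative of t |-> F (Q + t v)
   at t = 0; graph of dF = {(Q,P) | dF(Q) = <P, .>} *)
Definition graph_dF (R : realType) (n d : nat) (F : Vn R n d -> R) :
  set (Tstar R n d) :=
  [set w | forall v : Vn R n d,
      derivable (fun t : R => F (w.1 + t *: v)) 0 1 /\
      (fun t : R => F (w.1 + t *: v))^`() 0 = pairing w.2 v].

(* F(Q_1..Q_n) = 2 sum_{1<=i<j<=n} (-1)^(i+j-1) omega(Q_i,Q_j);
   with 0-based indices i,j the sign exponent is (i+1)+(j+1)-1 = i+j+1. *)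
Definition Fgen (R : realType) (n d : nat) (Q : Vn R n d) : R :=
  2 * \sum_(i < n) \sum_(j < n | (i < j)%N)
        (-1) ^+ (i + j + 1) * omega (Q i) (Q j).

From HB Require Import structures.
From mathcomp Require Import all_boot all_order all_algebra.
From mathcomp Require Import all_classical all_reals all_analysis.
From mathcomp Require Import ring.
Set Implicit Arguments. Unset Strict Implicit. Unset Printing Implicit Defensive.
Import Order.TTheory GRing.Theory Num.Theory.
Local Open Scope ring_scope.
Local Open Scope classical_set_scope.

(* Phi pulls the canonical form back to the difference of omega on the two
   factors, so pairing against the elements (y_i, y_(i+1)) of scriptL and
   shifting the cyclic index shows that scriptL is its own symplectic
   orthogonal. F is quadratic, so dF_Q(v) = B(Q,v) + B(v,Q) for the bilinear
   form B with F(Q) = B(Q,Q); in particular graph dF is isotropic. Regrouped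
   by index, dF_Q(v) = sum_k omega(X_k, v_k) with X_k an alternating sum of the
   2 Q_i; when Q_i = (z_i + z_(i+1))/2 and n is odd, X_k telescopes to
   z_k - z_(k+1), which is exactly the covector of the point of scriptL over Q.
   So scriptL is contained in, hence by maximality equal to, graph dF.
   For even n the cyclic sequence z_i = (-1)^i a lies over the base point 0
   with a nonzero covector, so scriptL has two points over the same base point
   and is no graph. *)

Lemma ordS_inord n (i : 'I_n.+1) : ordS i = inord i.+1.
Proof.
apply: val_inj => /=; case: (ltnP i.+1 n.+1) => [lt_iSn | le_nSi].
  by rewrite modn_small // inordK.
have -> : i.+1 = n.+1 by apply/eqP; rewrite eqn_leq le_nSi ltn_ord.
by rewrite modnn /inord /insubd insubF //= ltnn.
Qed.

Lemma inord_wrap n : inord n.+1 = ord0 :> 'I_n.+1.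
Proof. by apply: val_inj; rewrite /= /inord /insubd insubF //= ltnn. Qed.

Section AlternatingSums.
Variables (R : pzRingType) (M : lmodType R).

Lemma sum_sign_telescope (A : nat -> M) m :
  \sum_(i < m) (-1) ^+ i *: (A i + A i.+1) = A 0%N - (-1) ^+ m *: A m.
Proof.
elim: m => [|m IHm]; first by rewrite big_ord0 expr0 scale1r subrr.
by rewrite big_ord_recr /= IHm scalerDr addrA subrK exprS mulN1r scaleNr opprK.
Qed.

Lemma sum_sign_lower (A : nat -> M) k :
  \sum_(i < k) (-1) ^+ (i + k + 1) *: (A i + A i.+1) = A k - (-1) ^+ k *: A 0%N.
Proof.
rewrite (eq_bigr (fun i : 'I_k => (-1) ^+ k.+1 *: ((-1) ^+ i *: (A i + A i.+1)))); last first.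
  by move=> i _; rewrite scalerA -exprD addSn addn1 addnC.
rewrite -scaler_sumr sum_sign_telescope exprS mulN1r scaleNr scalerBr signrZK.
by rewrite opprB.
Qed.

Lemma sum_sign_upper (A : nat -> M) k n : (k < n)%N ->
  \sum_(k.+1 <= j < n) (-1) ^+ (k + j + 1) *: (A j + A j.+1)
  = A k.+1 - (-1) ^+ (n - k.+1) *: A n.
Proof.
move=> lt_kn; rewrite -[k.+1 in LHS]add0n big_addn.
have sign_shift i : (-1) ^+ (k + (i + k.+1) + 1) = (-1) ^+ i :> R.
  by rewrite -signr_odd -[RHS]signr_odd !oddD /=; case: (odd i); case: (odd k).
transitivity (\sum_(0 <= i < n - k.+1) (-1) ^+ i *: (A (i + k.+1)%N + A (i.+1 + k.+1)%N)).
  by apply: eq_bigr => i _; rewrite sign_shift.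
by rewrite big_mkord (sum_sign_telescope (fun i => A (i + k.+1)%N)) add0n subnK.
Qed.

Definition alt_comb n (a : 'I_n -> M) (k : 'I_n) : M :=
  \sum_(i < n | (i < k)%N) (-1) ^+ (i + k + 1) *: a i
  - \sum_(j < n | (k < j)%N) (-1) ^+ (k + j + 1) *: a j.

Lemma alt_combZ n (a : 'I_n -> M) t k :
  alt_comb (fun i => t *: a i) k = t *: alt_comb a k.
Proof.
rewrite /alt_comb scalerBr !scaler_sumr.
by congr (_ - _); apply: eq_bigr => i _; rewrite !scalerA commr_sign.
Qed.

Lemma alt_comb_cycle n (z : 'I_n -> M) (k : 'I_n) : odd n ->
  alt_comb (fun i => z i + z (ordS i)) k = z k - z (ordS k).
Proof.
case: n z k => [// | n] z k odd_n.
pose A m := z (inord m).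
have zA (i : 'I_n.+1) : z i = A i by rewrite /A inord_val.
have zSA (i : 'I_n.+1) : z (ordS i) = A i.+1 by rewrite /A ordS_inord.
have A_wrap : A n.+1 = A 0%N.
  by rewrite /A inord_wrap; congr z; apply: val_inj; rewrite /= inordK.
pose lowF i := (-1) ^+ (i + k + 1) *: (A i + A i.+1).
pose upF j := (-1) ^+ (k + j + 1) *: (A j + A j.+1).
rewrite /alt_comb [X in X - _](eq_bigr (fun i : 'I_n.+1 => lowF i)) => [|i _]; last first.
  by rewrite zA zSA.
rewrite [X in _ - X](eq_bigr (fun j : 'I_n.+1 => upF j)) => [|j _]; last first.
  by rewrite zA zSA.
rewrite -(big_ord_widen _ lowF (ltnW (ltn_ord k))) sum_sign_lower.
rewrite -(big_geq_mkord k.+1 n.+1 xpredT upF) sum_sign_upper // A_wrap.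
have sign_wrap : (-1) ^+ (n.+1 - k.+1) = (-1) ^+ k :> R.
  by rewrite -signr_odd oddB // odd_n addTb oddS negbK signr_odd.
by rewrite sign_wrap zA zSA opprB addrA subrK.
Qed.

End AlternatingSums.

Section Omega.
Variables (R : realType) (d : nat).
Implicit Types (a b c : V R d) (u : 'rV[R]_d).

Lemma omegaE a b :
  omega a b = \sum_(k < d) (a.1 0 k * b.2 0 k - a.2 0 k * b.1 0 k).
Proof. by rewrite /omega /dotv -sumrB. Qed.

Lemma omegaDl a b c : omega (a + b) c = omega a c + omega b c.
Proof. by rewrite !omegaE -big_split; apply: eq_bigr => k _ /=; rewrite !mxE; ring. Qed.

Lemma omegaZl t a c : omega (t *: a) c = t * omega a c.
Proof. by rewrite !omegaE mulr_sumr; apply: eq_bigr => k _ /=; rewrite !mxE; ring. Qed.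

Lemma omegaC a b : omega a b = - omega b a.
Proof. by rewrite !omegaE -sumrN; apply: eq_bigr => k _; ring. Qed.

Lemma omega0l c : omega 0 c = 0.
Proof. by rewrite -(scale0r 0) omegaZl mul0r. Qed.

Lemma omegaNl a c : omega (- a) c = - omega a c.
Proof. by rewrite -scaleN1r omegaZl mulN1r. Qed.

Lemma omegaBl a b c : omega (a - b) c = omega a c - omega b c.
Proof. by rewrite omegaDl omegaNl. Qed.

Lemma omega_suml I (r : seq I) (P : pred I) (f : I -> V R d) c :
  omega (\sum_(i <- r | P i) f i) c = \sum_(i <- r | P i) omega (f i) c.
Proof. exact: (big_morph (fun a => omega a c) (fun a b => omegaDl a b c) (omega0l c)). Qed.

Lemma omega0r c : omega c 0 = 0.
Proof. by rewrite omegaC omega0l oppr0. Qed.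

Lemma omegaDr a b c : omega c (a + b) = omega c a + omega c b.
Proof. by rewrite omegaC omegaDl opprD -!omegaC. Qed.

Lemma omegaZr t a c : omega c (t *: a) = t * omega c a.
Proof. by rewrite omegaC omegaZl -mulrN -omegaC. Qed.

Lemma dotv_ge0 u : 0 <= dotv u u.
Proof. by apply: sumr_ge0 => k _; rewrite -expr2 sqr_ge0. Qed.

Lemma dotv_eq0 u : dotv u u = 0 -> u = 0.
Proof.
move=> /psumr_eq0P u0; apply/matrixP => i k; rewrite (ord1 i) mxE.
by apply/eqP; rewrite -sqrf_eq0 expr2 u0 // => j _; rewrite -expr2 sqr_ge0.
Qed.

Lemma omega_nondeg a : (forall c, omega a c = 0) -> a = 0.
Proof.
move=> a0; have : omega a (- a.2, a.1) = dotv a.1 a.1 + dotv a.2 a.2.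
  by rewrite omegaE /dotv -big_split; apply: eq_bigr => k _ /=; rewrite mxE; ring.
rewrite a0 => /esym/eqP; rewrite paddr_eq0 ?dotv_ge0 // => /andP[/eqP h1 /eqP h2].
by case: a a0 h1 h2 => a1 a2 /= _ /dotv_eq0 -> /dotv_eq0 ->.
Qed.

End Omega.

Lemma is_derive_quadratic (R : realType) (a b c : R) :
  is_derive (0 : R) 1 (fun t => a + t * b + t ^+ 2 * c) b.
Proof.
apply: is_derive_eq.
by rewrite expr0n /= !scaler0 !scale0r !add0r !scaler0 addr0 mul1r; exact: mulr1.
Qed.

Section Generating.
Variables (R : realType) (n d : nat).
Implicit Types (Q W v : Vn R n d) (u : Tstar R n d).

Definition Fbilin Q W : R :=
  2 * \sum_(i < n) \sum_(j < n | (i < j)%N) (-1) ^+ (i + j + 1) * omega (Q i) (W j).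

Lemma FgenE Q : Fgen Q = Fbilin Q Q. Proof. by []. Qed.

Lemma FbilinDl Q W v t : Fbilin (Q + t *: v) W = Fbilin Q W + t * Fbilin v W.
Proof.
rewrite /Fbilin mulrCA -mulrDr; congr (2 * _).
rewrite mulr_sumr -big_split; apply: eq_bigr => i _.
rewrite mulr_sumr -big_split; apply: eq_bigr => j _.
by rewrite !ffunE omegaDl omegaZl mulrDr mulrCA.
Qed.

Lemma FbilinDr Q W v t : Fbilin W (Q + t *: v) = Fbilin W Q + t * Fbilin W v.
Proof.
rewrite /Fbilin mulrCA -mulrDr; congr (2 * _).
rewrite mulr_sumr -big_split; apply: eq_bigr => i _.
rewrite mulr_sumr -big_split; apply: eq_bigr => j _.
by rewrite !ffunE omegaDr omegaZr mulrDr mulrCA.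
Qed.

Lemma Fgen_derive Q v :
  derivable (fun t : R => Fgen (Q + t *: v)) 0 1 /\
  (fun t : R => Fgen (Q + t *: v))^`() 0 = Fbilin Q v + Fbilin v Q.
Proof.
have -> : (fun t : R => Fgen (Q + t *: v)) =
          (fun t => Fgen Q + t * (Fbilin Q v + Fbilin v Q) + t ^+ 2 * Fgen v).
  by apply: funext => t; rewrite !FgenE FbilinDl !FbilinDr; ring.
have D := is_derive_quadratic (Fgen Q) (Fbilin Q v + Fbilin v Q) (Fgen v).
by split; [exact: ex_derive | rewrite derive1E derive_val].
Qed.

Lemma graph_dFgenP u :
  graph_dF (@Fgen R n d) u <-> forall v, pairing u.2 v = Fbilin u.1 v + Fbilin v u.1.
Proof.
split=> [graph_u v | dF_u v]; have [D dF] := Fgen_derive u.1 v.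
  by have [_ <-] := graph_u v.
by rewrite dF dF_u.
Qed.

Lemma Fbilin_sym_alt_comb Q v :
  Fbilin Q v + Fbilin v Q = 2 * \sum_(k < n) omega (alt_comb Q k) (v k).
Proof.
rewrite /Fbilin -mulrDr; congr (2 * _).
rewrite /alt_comb [X in _ = X](eq_bigr (fun k : 'I_n =>
    \sum_(i < n | (i < k)%N) omega ((-1) ^+ (i + k + 1) *: Q i) (v k)
  - \sum_(j < n | (k < j)%N) omega ((-1) ^+ (k + j + 1) *: Q j) (v k))); last first.
  by move=> k _; rewrite omegaBl !omega_suml.
rewrite sumrB; congr (_ + _).
  rewrite (exchange_big_dep xpredT) //=; apply: eq_bigr => j _; apply: eq_bigr => i _.
  by rewrite omegaZl.
rewrite -sumrN; apply: eq_bigr => i _; rewrite -sumrN; apply: eq_bigr => j _.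
by rewrite omegaZl omegaC mulrN.
Qed.

End Generating.

Section Identification.
Variables (R : realType) (n d : nat).
Implicit Types (y : 'I_n -> V R d) (z x : 'I_n -> V R d * V R d) (u w : Tstar R n d).

Definition cyc_pairs y (i : 'I_n) : V R d * V R d := (y i, y (ordS i)).

Lemma Phi_baseE z i : (Phi z).1 i = 2^-1 *: ((z i).1 + (z i).2).
Proof. by rewrite ffunE. Qed.

Lemma pairing_PhiE z (v : Vn R n d) :
  pairing (Phi z).2 v = \sum_i omega ((z i).1 - (z i).2) (v i).
Proof.
apply: eq_bigr => i _; rewrite ffunE omegaE /dotv -big_split.
by apply: eq_bigr => k _ /=; rewrite !mxE; ring.
Qed.

Lemma can_form_Phi z x :
  can_form (Phi z) (Phi x) = \sum_i (omega (z i).2 (x i).2 - omega (z i).1 (x i).1).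
Proof.
rewrite /can_form /pairing -sumrB; apply: eq_bigr => i _.
rewrite !ffunE /= !omegaE /dotv -!big_split -!sumrB /=.
by apply: eq_bigr => k _; rewrite !mxE; field.
Qed.

Definition Phi_inv u i : V R d * V R d :=
  (((u.1 i).1 + 2^-1 *: (u.2 i).2, (u.1 i).2 - 2^-1 *: (u.2 i).1),
   ((u.1 i).1 - 2^-1 *: (u.2 i).2, (u.1 i).2 + 2^-1 *: (u.2 i).1)).

Lemma Phi_invK u : Phi (Phi_inv u) = u.
Proof.
case: u => Q P; congr (_, _); apply/ffunP => i; rewrite !ffunE /Phi_inv /=;
by case: (Q i) (P i) => [q1 q2] [p1 p2]; congr (_, _);
  apply/matrixP => a b; rewrite !mxE; field.
Qed.

Lemma Phi_lin t z x : Phi (fun i => t *: z i + x i) = t *: Phi z + Phi x.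
Proof.
congr (_, _); apply/ffunP => i; rewrite !ffunE /=;
by congr (_, _); apply/matrixP => a b; rewrite !mxE; field.
Qed.

Lemma Phi0 : Phi (fun _ => 0) = 0 :> Tstar R n d.
Proof.
congr (_, _); apply/ffunP => i; rewrite !ffunE /=;
by congr (_, _); apply/matrixP => a b; rewrite !mxE; field.
Qed.

Lemma scriptL_cyc y : scriptL (Phi (cyc_pairs y)).
Proof. by exists (cyc_pairs y). Qed.

Lemma scriptLP u : scriptL u -> exists y, u = Phi (cyc_pairs y).
Proof.
move=> [z [zS <-]]; exists (fun i => (z i).1); congr Phi; apply: funext => i.
by rewrite /cyc_pairs -zS; case: (z i).
Qed.

Lemma can_form_cyc z y :
  can_form (Phi z) (Phi (cyc_pairs y))
  = \sum_i omega ((z i).2 - (z (ordS i)).1) (y (ordS i)).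
Proof.
rewrite can_form_Phi sumrB [X in _ - X](reindex_inj (@ordS_inj n)) /=.
by rewrite -sumrB; apply: eq_bigr => i _; rewrite omegaBl.
Qed.

Lemma scriptL_subspace : is_subspace (@scriptL R n d).
Proof.
split; first by rewrite -Phi0; exact: (scriptL_cyc (fun _ => 0)).
move=> t _ _ /scriptLP[y ->] /scriptLP[y' ->]; rewrite -Phi_lin.
exact: (scriptL_cyc (fun i => t *: y i + y' i)).
Qed.

Lemma scriptL_isotropic u w : scriptL u -> scriptL w -> can_form u w = 0.
Proof.
move=> /scriptLP[y ->] /scriptLP[y' ->]; rewrite can_form_cyc.
by rewrite big1 // => i _; rewrite subrr omega0l.
Qed.

Lemma scriptL_coisotropic u : (forall w, scriptL w -> can_form u w = 0) -> scriptL u.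
Proof.
move=> orth; rewrite -(Phi_invK u); exists (Phi_inv u); split => // i.
apply/eqP; rewrite -subr_eq0; apply/eqP/omega_nondeg => e.
pose y j := if j == ordS i then e else 0.
have := orth _ (scriptL_cyc y).
rewrite -{1}(Phi_invK u) can_form_cyc (bigD1 i) //= big1 => [|j ne_ji].
  by rewrite /y eqxx addr0.
by rewrite /y (inj_eq (@ordS_inj n)) (negbTE ne_ji) omega0r.
Qed.

Lemma scriptL_lagrangian : lagrangian (@scriptL R n d).
Proof.
split=> [|u]; first exact: scriptL_subspace.
by split=> [Lu w Lw | ]; [exact: scriptL_isotropic | exact: scriptL_coisotropic].
Qed.

Lemma scriptL_sub_graph_dFgen : odd n -> @scriptL R n d `<=` graph_dF (@Fgen R n d).
Proof.
move=> odd_n _ /scriptLP[y ->]; apply/graph_dFgenP => v.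
rewrite Fbilin_sym_alt_comb pairing_PhiE mulr_sumr; apply: eq_bigr => k _.
have -> : alt_comb (Phi (cyc_pairs y)).1 k = 2^-1 *: alt_comb (fun i => y i + y (ordS i)) k.
  by rewrite -alt_combZ; congr alt_comb; apply: funext => i; rewrite Phi_baseE.
by rewrite alt_comb_cycle // omegaZl mulrA mulfV ?mul1r.
Qed.

Lemma graph_dFgen_isotropic u w :
  graph_dF (@Fgen R n d) u -> graph_dF (@Fgen R n d) w -> can_form u w = 0.
Proof.
move=> /graph_dFgenP dFu /graph_dFgenP dFw.
by rewrite /can_form dFw dFu [X in _ - X]addrC subrr.
Qed.

Lemma scriptL_eq_graph_dFgen : odd n -> @scriptL R n d = graph_dF (@Fgen R n d).
Proof.
move=> odd_n; apply/seteqP; split; first exact: scriptL_sub_graph_dFgen.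
move=> u dFu; apply: scriptL_coisotropic => w Lw.
exact: graph_dFgen_isotropic dFu (scriptL_sub_graph_dFgen odd_n Lw).
Qed.

Lemma scriptL_not_graph : ~~ odd n -> (0 < n)%N -> (0 < d)%N ->
  exists u w, [/\ scriptL u, scriptL w, u.1 = w.1 &
                  exists v, pairing u.2 v != pairing w.2 v].
Proof.
move=> even_n n_gt0 d_gt0.
pose e : 'rV[R]_d := const_mx 1.
pose a : V R d := (e, 0); pose c : V R d := (0, e).
pose s (i : 'I_n) : R := (-1) ^+ i.
have sS i : s (ordS i) = - s i.
  by rewrite /s -signr_odd /= odd_mod ?(negbTE even_n) //= signrN signr_odd.
have omega_ac : omega a c = d%:R.
  rewrite omegaE (eq_bigr (fun _ => 1)) => [|k _]; last by rewrite /= !mxE mulr1 mulr0 subr0.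
  by rewrite sumr_const card_ord.
pose y i := s i *: a.
exists (Phi (cyc_pairs y)), (Phi (cyc_pairs (fun _ => 0))).
split; [exact: scriptL_cyc | exact: scriptL_cyc | |].
  by apply/ffunP => i; rewrite !Phi_baseE /cyc_pairs /y sS scaleNr subrr addr0.
exists [ffun i => s i *: c]; rewrite !pairing_PhiE [X in _ != X]big1 => [|i _]; last first.
  by rewrite subrr omega0l.
rewrite (eq_bigr (fun _ => (2 * d)%:R)) => [|i _]; last first.
  rewrite /cyc_pairs /y ffunE sS scaleNr opprK omegaDl !omegaZl omegaZr omega_ac.
  have ss : s i * s i = 1 by rewrite /s -exprD -signr_odd addnn odd_double.
  by rewrite mulrA ss mul1r natrM mulr_natl mulr2n.
rewrite big_const_ord iter_addr_0 mulrn_eq0 negb_or -lt0n n_gt0.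
by rewrite pnatr_eq0 -lt0n muln_gt0 d_gt0.
Qed.

Lemma graph_dF_fibre (F : Vn R n d -> R) u w v :
  graph_dF F u -> graph_dF F w -> u.1 = w.1 -> pairing u.2 v = pairing w.2 v.
Proof. by move=> dFu dFw uw; have [_ <-] := dFu v; have [_ <-] := dFw v; rewrite uw. Qed.

End Identification.

Theorem mainTheorem11 (R : realType) (d n : nat) (hd : (1 <= d)%N) (hn : (1 <= n)%N) :
  lagrangian (@scriptL R n d) /\
  (odd n -> @scriptL R n d = graph_dF (@Fgen R n d)) /\
  (~~ odd n -> forall F : Vn R n d -> R, @scriptL R n d <> graph_dF F).
Proof.
split; first exact: scriptL_lagrangian.
split; first exact: scriptL_eq_graph_dFgen.
move=> even_n F L_eq.
have [u [w [Lu Lw uw [v]]]] := @scriptL_not_graph R n d even_n hn hd.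
rewrite L_eq in Lu Lw.
by rewrite (graph_dF_fibre v Lu Lw uw) eqxx.
Qed.
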